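(* Let $M,M'\in\mathrm{Mat}(2,\mathbb{Z})$ be such that their reductions mod $n$ are $\mathrm{Mat}(2,\mathbb{Z}_n)^\times$-conjugate for some $n\ge2$. Then $\det(M)\equiv\det(M')$ and $\mathrm{trace}(M)\equiv\mathrm{trace}(M')$ mod $n$, and the matrix gcds $r=\mathrm{mgcd}(M)$, $r'=\mathrm{mgcd}(M')$ generate the same ideal in $\mathbb{Z}_n$, i.e. $r\,\mathbb{Z}_n=r'\,\mathbb{Z}_n$.
   Context: For $M=\begin{pmatrix}a&b\\c&d\end{pmatrix}$, $\mathrm{mgcd}(M)=\gcd(b,c,d-a)\ge0$. $\mathrm{Mat}(2,\mathbb{Z}_n)^\times$ is the group of invertible $2\times2$ matrices over $\mathbb{Z}_n=\mathbb{Z}/n\mathbb{Z}$. *)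

From mathcomp Require Import all_boot all_order all_algebra.
Set Implicit Arguments. Unset Strict Implicit. Unset Printing Implicit Defensive.
Import Order.TTheory GRing.Theory Num.Theory.
Local Open Scope ring_scope.

Definition mgcd (M : 'M[int]_2) : int :=
  gcdz (gcdz (M 0 1) (M 1 0)) (M 1 1 - M 0 0).

Definition redmx (n : nat) (M : 'M[int]_2) : 'M['Z_n]_2 :=
  map_mx (fun z : int => z%:~R) M.

From mathcomp Require Import all_boot all_order all_algebra.
Import Order.TTheory GRing.Theory Num.Theory.
Local Open Scope ring_scope.

(* For the matrix gcd, write M = a + g K with a = M 0 0, g = mgcd M and
   K integral; then a conjugate P^-1 M P over any commutative ring R equals
   a + g P^-1 K P, so its off-diagonal entries and the difference of its
   diagonal entries are multiples of g in R, and so is their gcd by Bezout. *)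

Lemma Zp_intr_eq0 (n : nat) (z : int) :
  (1 < n)%N -> (z%:~R : 'Z_n) = 0 -> (n%:Z %| z)%Z.
Proof.
move=> n_gt1 z0; rewrite dvdzE; apply/dvdnP; exists (`|z| %/ n)%N.
have absz0 : (`|z|%N%:R : 'Z_n) = 0.
  move: z0; rewrite [in X in X -> _](intEsign z) intrM intr_sign.
  by case: (z < 0); rewrite ?mul1r // mulN1r => /eqP; rewrite oppr_eq0 => /eqP.
have := congr1 (@nat_of_ord _) absz0; by rewrite val_Zp_nat //= => /eqP /divnK.
Qed.

Lemma Zp_intr_inj_mod (n : nat) (a b : int) :
  (1 < n)%N -> (a%:~R : 'Z_n) = b%:~R -> (a = b %[mod n%:Z])%Z.
Proof.
move=> n_gt1 eq_ab; apply/eqP; rewrite eqz_mod_dvd; apply: Zp_intr_eq0 => //.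
by rewrite intrB eq_ab subrr.
Qed.

Lemma redmx_det (n : nat) (M : 'M[int]_2) : \det (redmx n M) = (\det M)%:~R.
Proof. exact: det_map_mx. Qed.

Lemma redmx_tr (n : nat) (M : 'M[int]_2) : \tr (redmx n M) = (\tr M)%:~R.
Proof. exact: trace_map_mx. Qed.

Lemma det_conjmx (R : comUnitRingType) (n : nat) (P A : 'M[R]_n) :
  P \in unitmx -> \det (invmx P *m A *m P) = \det A.
Proof.
by move=> P_unit; rewrite !det_mulmx mulrAC -det_mulmx mulVmx // det1 mul1r.
Qed.

Lemma mxtrace_conjmx (R : comUnitRingType) (n : nat) (P A : 'M[R]_n) :
  P \in unitmx -> \tr (invmx P *m A *m P) = \tr A.
Proof. by move=> P_unit; rewrite mxtrace_mulC mulmxA mulmxV // mul1mx. Qed.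

Lemma mgcd_dvd_sub_scalar (M : 'M[int]_2) (i j : 'I_2) :
  (mgcd M %| (M - (M 0 0)%:M)%R i j)%Z.
Proof.
have dvd_b : (mgcd M %| (M 0 1)%R)%Z by apply: dvdz_trans (dvdz_gcdl _ _) (dvdz_gcdl _ _).
have dvd_c : (mgcd M %| (M 1 0)%R)%Z by apply: dvdz_trans (dvdz_gcdl _ _) (dvdz_gcdr _ _).
have dvd_da : (mgcd M %| (M 1 1 - M 0 0)%R)%Z by apply: dvdz_gcdr.
have ord2 (k : 'I_2) : k = 0 \/ k = 1.
  by case: k => -[|[|//]] ?; [left | right]; apply: val_inj.
by case: (ord2 i) => ->; case: (ord2 j) => ->; rewrite !mxE /= ?subrr ?subr0.
Qed.

Lemma mgcd_sub_scalarE (M : 'M[int]_2) :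
  exists K : 'M[int]_2, M - (M 0 0)%:M = mgcd M *: K.
Proof.
exists (map_mx (fun z => (z %/ mgcd M)%Z) (M - (M 0 0)%:M)).
apply/matrixP=> i j.
by rewrite [RHS]mxE [in RHS]mxE mulrC divzK ?mgcd_dvd_sub_scalar.
Qed.

Section RingMultiples.
Variable R : comUnitRingType.

Definition rmultiple (g x : R) := exists k : R, x = k * g.

Lemma rmultipleD (g x y : R) :
  rmultiple g x -> rmultiple g y -> rmultiple g (x + y).
Proof. by move=> [a ->] [b ->]; exists (a + b); rewrite mulrDl. Qed.

Lemma rmultipleMl (g u x : R) : rmultiple g x -> rmultiple g (u * x).
Proof. by move=> [a ->]; exists (u * a); rewrite mulrA. Qed.

Lemma rmultiple_gcdz (g : R) (x y : int) :
  rmultiple g x%:~R -> rmultiple g y%:~R -> rmultiple g (gcdz x y)%:~R.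
Proof.
move=> gx gy; have [u [v <-]] := Bezoutz x y.
by rewrite intrD !intrM; apply: rmultipleD; apply: rmultipleMl.
Qed.

Lemma rmultiple_mgcd (g c : R) (M : 'M[int]_2) (X : 'M[R]_2) :
  map_mx intr M - c%:M = g *: X -> rmultiple g (mgcd M)%:~R.
Proof.
move=> eqMX; have entry i j : (M i j)%:~R - c *+ (i == j) = X i j * g.
  by have := congr1 (fun A : 'M[R]_2 => A i j) eqMX; rewrite !mxE mulrC.
apply: rmultiple_gcdz; first apply: rmultiple_gcdz.
- by exists (X 0 1); rewrite -entry subr0.
- by exists (X 1 0); rewrite -entry subr0.
- by exists (X 1 1 - X 0 0); rewrite mulrBl -!entry intrB opprB addrA subrK.
Qed.

Lemma rmultiple_mgcd_similar (M M' : 'M[int]_2) (P : 'M[R]_2) :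
  P \in unitmx -> map_mx intr M' = invmx P *m map_mx intr M *m P ->
  rmultiple (mgcd M)%:~R (mgcd M')%:~R.
Proof.
move=> P_unit simMM'; have [K eqMK] := mgcd_sub_scalarE M.
apply: (@rmultiple_mgcd _ (M 0 0)%:~R _ (invmx P *m map_mx intr K *m P)).
have eqMK_R : map_mx (intr : int -> R) M =
    (M 0 0)%:~R%:M + (mgcd M)%:~R *: map_mx intr K.
  apply/matrixP=> i j; have := congr1 (fun A : 'M[int]_2 => A i j) eqMK.
  by rewrite !mxE => /(canRL (subrK _)) ->; rewrite intrD intrM rmorphMn addrC.
rewrite simMM' eqMK_R mulmxDr mulmxDl mul_mx_scalar -scalemxAl mulVmx //.
by rewrite scalemx1 addrAC subrr add0r -scalemxAr -scalemxAl.
Qed.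

End RingMultiples.

Theorem proposition40 (n : nat) (M M' : 'M[int]_2) :
  (2 <= n)%N ->
  (exists2 P : 'M['Z_n]_2, P \in unitmx & redmx n M' = invmx P *m redmx n M *m P) ->
  [/\ (\det M = \det M' %[mod n%:Z])%Z,
      (\tr M = \tr M' %[mod n%:Z])%Z &
      (exists u : 'Z_n, (mgcd M)%:~R = u * (mgcd M')%:~R) /\
      (exists v : 'Z_n, (mgcd M')%:~R = v * (mgcd M)%:~R)].
Proof.
move=> n_gt1 [P P_unit simMM'].
have Pinv_unit : invmx P \in unitmx by rewrite unitmx_inv.
have simM'M : redmx n M = invmx (invmx P) *m redmx n M' *m invmx P.
  by rewrite invmxK simMM' !mulmxA mulmxV // mul1mx -mulmxA mulmxV // mulmx1.
split.
- by apply: Zp_intr_inj_mod => //; rewrite -!redmx_det simMM' det_conjmx.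
- by apply: Zp_intr_inj_mod => //; rewrite -!redmx_tr simMM' mxtrace_conjmx.
- split; [exact: rmultiple_mgcd_similar Pinv_unit simM'M
         | exact: rmultiple_mgcd_similar P_unit simMM'].
Qed.
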